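(* Let $d_{21}$ be the 3-dimensional complex associative algebra with basis $\{e_1,e_2,e_3\}$ and nonzero products $e_1e_1=e_3$, $e_1e_2=e_3$, $e_2e_1=-e_3$. For every Hermitian inner product $\langle\cdot,\cdot\rangle$ on $d_{21}$, $(d_{21},\langle\cdot,\cdot\rangle)$ is not a critical point of $F_3:\mathcal A_3\to\mathbb R$. Equivalently, no point of the orbit $\mathrm{GL}(3).[d_{21}]\subset\mathbb PV_3$ is a critical point of $F_3$.
   Context: $V_3$ is the space of bilinear maps $\mathbb C^3\times\mathbb C^3\to\mathbb C^3$ with standard Hermitian structures and $\mathrm{GL}(3)$-action $g.\mu(X,Y)=g\mu(g^{-1}X,g^{-1}Y)$; $\mathcal A_3$ is the projectivized set of associative algebras. An algebra with a Hermitian inner product is viewed as a point of $\mathbb PV_3$ via an orthonormal basis. $L^\mu_XY=\mu(X,Y)$, $R^\mu_XY=\mu(Y,X)$, $\mathrm M_\mu=2\sum_i L^\mu_{X_i}(L^\mu_{X_i})^*-2\sum_i (L^\mu_{X_i})^*L^\mu_{X_i}-2\sum_i (R^\mu_{X_i})^*R^\mu_{X_i}$ ($\{X_i\}$ orthonormal), $F_3([\mu])=\operatorname{tr}\mathrm M_\mu^2/\|\mu\|^4$; $[\mu]$ is a critical point iff $\mathrm M_\mu=c_\mu I+D_\mu$ with $c_\mu\in\mathbb R$ and $D_\mu$ a derivation of $\mu$. *)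

(* The field of complex numbers is R[i] = complex R for a
   real-number structure R : realType (mathcomp-analysis), i.e. literally C. *)
From HB Require Import structures.
From mathcomp Require Import all_boot all_order all_algebra.
From mathcomp Require Import complex.
From mathcomp Require Import reals.
Set Implicit Arguments. Unset Strict Implicit. Unset Printing Implicit Defensive.
Import Order.TTheory GRing.Theory Num.Theory.
Local Open Scope ring_scope.

Section Defs.
Variable C : numClosedFieldType.

(* A bilinear map mu : C^3 x C^3 -> C^3 (a point of V_3), given by its values
   on the standard basis: mu i j = mu(e_i, e_j) (a column vector). *)
Definition bilin := 'I_3 -> 'I_3 -> 'cV[C]_3.

Definition ev (i : 'I_3) : 'cV[C]_3 := delta_mx i 0.

Definition bapp (mu : bilin) (x y : 'cV[C]_3) : 'cV[C]_3 :=
  \sum_(i < 3) \sum_(j < 3) (x i 0 * y j 0) *: mu i j.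

Definition act (g : 'M[C]_3) (mu : bilin) : bilin :=
  fun i j => g *m bapp mu (invmx g *m ev i) (invmx g *m ev j).

Definition Lop (mu : bilin) (i : 'I_3) : 'M[C]_3 :=
  \matrix_(k, j) (mu i j) k 0.
Definition Rop (mu : bilin) (i : 'I_3) : 'M[C]_3 :=
  \matrix_(k, j) (mu j i) k 0.

(* adjoint w.r.t. the standard Hermitian inner product: conjugate transpose *)
Definition adj (A : 'M[C]_3) : 'M[C]_3 := \matrix_(i, j) (A j i)^*.

Definition Mmu (mu : bilin) : 'M[C]_3 :=
  \sum_(i < 3) (2%:R *: (Lop mu i *m adj (Lop mu i)))
  - \sum_(i < 3) (2%:R *: (adj (Lop mu i) *m Lop mu i))
  - \sum_(i < 3) (2%:R *: (adj (Rop mu i) *m Rop mu i)).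

Definition is_derivation (mu : bilin) (D : 'M[C]_3) : Prop :=
  forall x y : 'cV[C]_3,
    D *m bapp mu x y = bapp mu (D *m x) y + bapp mu x (D *m y).

(* [mu] is a critical point of F_3:  M_mu = c I + D, c real, D a derivation *)
Definition critical (mu : bilin) : Prop :=
  exists c : C, exists D : 'M[C]_3,
    c \is Num.real /\ is_derivation mu D /\ Mmu mu = c%:M + D.

(* the algebra d_21: e1e1 = e3, e1e2 = e3, e2e1 = -e3, other products 0
   (indices 0,1,2 stand for e1,e2,e3) *)
Definition d21 : bilin := fun i j =>
  if (i == 0 :> nat) && (j == 0 :> nat) then ev (inord 2)
  else if (i == 0 :> nat) && (j == 1 :> nat) then ev (inord 2)
  else if (i == 1 :> nat) && (j == 0 :> nat) then - ev (inord 2)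
  else 0.

End Defs.

(* Write v := g e3 and G := g^-1. The transported algebra g.d21 is
   (x, y) |-> B(Gx, Gy) v, with B the bilinear form of d21, so its structure
   constants are h_ij v where h is the Gram matrix of B on the columns of G,
   and M = a v v^* - 2|v|^2 Q with Q := h^* h + h^T^* h^T.
   Conjugating a derivation of g.d21 back by g gives a derivation of d21,
   whose matrix satisfies D01 = D02 = 0 and D11 = D00. Reading M = cI + D in
   the basis (g e_i), K := G Q g therefore has first row (k, 0, 0) and
   K11 = k, while K22 = 0 because Q v = 0. So the first row w of G satisfies
   w Q = k w and tr Q = 2k. On the other hand the polynomial identity
   2 (w Q).conj(w) - |w|^2 tr Q = 2 |w|^6 holds for all w and q; hence w = 0,
   contradicting the invertibility of G. *)

From HB Require Import structures.
From mathcomp Require Import all_boot all_order all_algebra.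
From mathcomp Require Import complex.
From mathcomp Require Import reals.
From mathcomp Require Import ring.
Import Order.TTheory GRing.Theory Num.Theory.
Local Open Scope ring_scope.

Section D21.
Variable C : numClosedFieldType.

Definition i0 : 'I_3 := @Ordinal 3 0 isT.
Definition i1 : 'I_3 := @Ordinal 3 1 isT.
Definition i2 : 'I_3 := @Ordinal 3 2 isT.

Lemma big_ord3 (V : nmodType) (F : 'I_3 -> V) :
  \sum_(i < 3) F i = F i0 + F i1 + F i2.
Proof.
rewrite !big_ord_recr big_ord0 /= add0r.
by congr (F _ + F _ + F _); apply: val_inj.
Qed.

Lemma ord3P (i : 'I_3) : [\/ i = i0, i = i1 | i = i2].
Proof.
by case: i => [[|[|[|//]]] ?]; [constructor 1 | constructor 2 | constructor 3];
  apply: val_inj.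
Qed.

Lemma mulmx_ev (A : 'M[C]_3) i k : (A *m ev C i) k 0 = A k i.
Proof. by rewrite !mxE big_ord3 !mxE; case: (ord3P i) => ->; rewrite /=; ring. Qed.

Lemma bapp_mulmx (mu : bilin C) (A B : 'M[C]_3) x y :
  bapp mu (A *m x) (B *m y)
  = \sum_i \sum_j (x i 0 * y j 0) *: bapp mu (A *m ev C i) (B *m ev C j).
Proof.
rewrite /bapp.
under eq_bigr do under eq_bigr do rewrite !mxE big_distrlr /= scaler_suml.
under eq_bigr do rewrite exchange_big /=.
rewrite exchange_big /=; apply: eq_bigr => i _.
under eq_bigr do under eq_bigr do rewrite scaler_suml.
under eq_bigr do rewrite exchange_big /=.
rewrite exchange_big /=; apply: eq_bigr => j _.
rewrite scaler_sumr; apply: eq_bigr => k _.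
rewrite scaler_sumr; apply: eq_bigr => l _.
by rewrite !mulmx_ev scalerA; congr (_ *: _); ring.
Qed.

Lemma bapp_act (g : 'M[C]_3) (mu : bilin C) x y :
  bapp (act g mu) x y = g *m bapp mu (invmx g *m x) (invmx g *m y).
Proof.
rewrite bapp_mulmx mulmx_sumr [LHS]/bapp; apply: eq_bigr => i _.
by rewrite mulmx_sumr; apply: eq_bigr => j _; rewrite scalemxAr.
Qed.

Lemma is_derivation_act {g D : 'M[C]_3} {mu : bilin C} : g \in unitmx ->
  is_derivation (act g mu) D -> is_derivation mu (invmx g *m D *m g).
Proof.
move=> gU hD x y; have := congr1 (mulmx (invmx g)) (hD (g *m x) (g *m y)).
rewrite !bapp_act !mulmxA mulVmx // !mul1mx -!mulmxA => ->.
by rewrite mulmxDr !mulmxA mulVmx // !mul1mx.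
Qed.

Definition d21_form (x y : 'cV[C]_3) : C :=
  x i0 0 * y i0 0 + x i0 0 * y i1 0 - x i1 0 * y i0 0.

Lemma bapp_d21 x y : bapp (d21 C) x y = d21_form x y *: ev C i2.
Proof.
rewrite /bapp !big_ord3 /d21 /d21_form /=.
have -> : inord 2 = i2 by apply: val_inj; rewrite /= inordK.
by rewrite !scaler0 !addr0 scalerN !scalerDl scaleNr.
Qed.

Lemma d21_derivationE (D : 'M[C]_3) : is_derivation (d21 C) D ->
  [/\ D i0 i1 = 0, D i0 i2 = 0 & D i1 i1 = D i0 i0].
Proof.
move=> hD; have E a b : d21_form (ev C a) (ev C b) * D i2 i2
    = d21_form (D *m ev C a) (ev C b) + d21_form (ev C a) (D *m ev C b).
  have := congr1 (fun u : 'cV[C]_3 => u i2 0) (hD (ev C a) (ev C b)).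
  rewrite !bapp_d21 -scalemxAr -scalerDl [LHS]mxE mulmx_ev => ->.
  by rewrite mxE /ev mxE eqxx mulr1.
have := E i0 i0; have := E i0 i1; have := E i1 i0; have := E i1 i2.
rewrite /d21_form !mulmx_ev !mxE /=.
rewrite !(oppr0, mul0r, mulr0, mul1r, mulr1, addr0, add0r, subr0, sub0r, mulN1r).
move=> e12 e10 e01 e00.
have D01 : D i0 i1 = 0.
  have two_neq0 : (2 : C) != 0 by rewrite pnatr_eq0.
  apply: (mulIf two_neq0); rewrite mul0r.
  by transitivity (D i2 i2 - D i2 i2); [rewrite {1}e01 e10; ring | ring].
split=> //; first by apply: oppr_inj; rewrite -e12 oppr0.
by transitivity (D i2 i2 - D i0 i0 - D i0 i1); [rewrite e01 | rewrite e00 D01]; ring.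
Qed.

Definition mxnorm2 {m n} (A : 'M[C]_(m, n)) : C := \sum_i \sum_j A i j * (A i j)^*.

Lemma mxnorm2_eq0 m n (A : 'M[C]_(m, n)) : mxnorm2 A = 0 -> A = 0.
Proof.
have ge0 (a : C) : 0 <= a * a^* by rewrite -normCK exprn_ge0.
move/psumr_eq0P => /(_ (fun i _ => sumr_ge0 _ (fun j _ => ge0 _))) A0.
apply/matrixP => i j; rewrite mxE.
have /psumr_eq0P Ai0 := A0 i isT.
by apply/eqP; rewrite -normr_eq0 -sqrf_eq0 normCK Ai0.
Qed.

Definition Qmat (h : 'M[C]_3) : 'M[C]_3 := adj h *m h + adj h^T *m h^T.

Lemma Mmu_rank1 {mu : bilin C} {h : 'M[C]_3} {v : 'cV[C]_3} :
  (forall i j, mu i j = h i j *: v) ->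
  Mmu mu = (2 * mxnorm2 h) *: (v *m (map_mx Num.conj v)^T)
           - (2 * mxnorm2 v) *: Qmat h.
Proof.
move=> hmu; apply/matrixP => k l.
rewrite /Mmu /Qmat /mxnorm2 /Lop /Rop /adj ?(mxE, summxE, big_ord3, big_ord1).
by rewrite !hmu ?mxE ?rmorphM; ring.
Qed.

Lemma Qmat_mulmx_eq0 (h : 'M[C]_3) (v : 'cV[C]_3) :
  h *m v = 0 -> h^T *m v = 0 -> Qmat h *m v = 0.
Proof. by move=> hv hTv; rewrite mulmxDl -!mulmxA hv hTv !mulmx0 addr0. Qed.

(* The Gram matrix of [d21_form] on the columns of any matrix whose first two
   rows are [w] and [q]. *)
Definition d21_gram (w q : 'rV[C]_3) : 'M[C]_3 := w^T *m (w + q) - q^T *m w.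

Lemma act_d21E (g : 'M[C]_3) i j :
  act g (d21 C) i j
  = d21_gram (row i0 (invmx g)) (row i1 (invmx g)) i j *: (g *m ev C i2).
Proof.
rewrite /act bapp_d21 -scalemxAr; congr (_ *: _).
by rewrite /d21_form !mulmx_ev /d21_gram !mxE !big_ord1 !mxE; ring.
Qed.

Lemma Qmat_d21_gram_mulmx_eq0 (w q : 'rV[C]_3) (v : 'cV[C]_3) :
  w *m v = 0 -> q *m v = 0 -> Qmat (d21_gram w q) *m v = 0.
Proof.
move=> wv qv; apply: Qmat_mulmx_eq0.
  by rewrite mulmxBl -!mulmxA mulmxDl wv qv addr0 !mulmx0 subr0.
by rewrite linearB /= !trmx_mul !trmxK mulmxBl -!mulmxA wv qv !mulmx0 subr0.
Qed.

Lemma d21_gramE (w q : 'rV[C]_3) i j :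
  d21_gram w q i j = w 0 i * w 0 j + w 0 i * q 0 j - q 0 i * w 0 j.
Proof. by rewrite !mxE !big_ord1 !mxE; ring. Qed.

Lemma Qmat_d21_gram_identity (w q : 'rV[C]_3) :
  2 * (\sum_l (w *m Qmat (d21_gram w q)) 0 l * (w 0 l)^*)
    - mxnorm2 w * \tr (Qmat (d21_gram w q))
  = 2 * mxnorm2 w ^+ 3.
Proof.
move: (d21_gramE w q); move: (d21_gram w q) => h hE.
rewrite /mxtrace /Qmat /mxnorm2 /adj ?(mxE, summxE, big_ord3, big_ord1) !hE.
by rewrite ?rmorphD ?rmorphB ?rmorphM; ring.
Qed.

Lemma d21_gram_eigenrow_eq0 {w q : 'rV[C]_3} {lam : C} :
  w *m Qmat (d21_gram w q) = lam *: w -> \tr (Qmat (d21_gram w q)) = 2 * lam -> w = 0.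
Proof.
move=> wQ trQ; apply: mxnorm2_eq0.
have := Qmat_d21_gram_identity w q; rewrite wQ trQ.
under eq_bigr do rewrite mxE -mulrA.
rewrite -mulr_sumr (_ : \sum_l _ = mxnorm2 w); last by rewrite /mxnorm2 big_ord1.
rewrite (_ : _ - _ = 0); last by ring.
move=> /esym/eqP.
by rewrite mulf_eq0 pnatr_eq0 expf_eq0 /= => /eqP.
Qed.

Section ActD21.
Variable g : 'M[C]_3.
Hypothesis gU : g \in unitmx.

Local Notation G := (invmx g).
Local Notation v := (g *m ev C i2).
Local Notation Q := (Qmat (d21_gram (row i0 G) (row i1 G))).
Local Notation K := (G *m Q *m g).

Lemma row_invmx_mul_v k : k != i2 -> row k G *m v = 0.
Proof.
move=> k2; rewrite -row_mul mulKmx //; apply/rowP => j.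
by rewrite !mxE (ord1 j) eqxx (negPf k2).
Qed.

Lemma v_neq0 : v != 0.
Proof.
apply: contra_neq (@oner_neq0 C) => v0.
by have := congr1 (fun u : 'cV[C]_3 => u i2 0) (mulKmx gU (ev C i2)); rewrite v0 mulmx0 !mxE !eqxx.
Qed.

Lemma row_conj_Mmu_act_d21 k : k != i2 ->
  row k (G *m Mmu (act g (d21 C)) *m g) = - (2 * mxnorm2 v) *: row k K.
Proof.
move=> k2; rewrite (Mmu_rank1 (act_d21E g)) mulmxBr mulmxBl linearB /= -!scalemxAr -!scalemxAl.
rewrite !linearZ /= mulmxA !row_mul row_invmx_mul_v // !mul0mx scaler0.
by rewrite add0r scalerN scaleNr.
Qed.

Lemma critical_act_d21 : critical (act g (d21 C)) ->
  [/\ K i0 i1 = 0, K i0 i2 = 0 & K i1 i1 = K i0 i0].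
Proof.
case=> c [D [_ [hD hM]]].
have /d21_derivationE[D01 D02 D11] := is_derivation_act gU hD.
have nv_neq0 : - (2 * mxnorm2 v) != 0.
  rewrite oppr_eq0 mulf_neq0 ?pnatr_eq0 //.
  by apply: contra_neq v_neq0; apply: mxnorm2_eq0.
have rowD k : k != i2 ->
    row k (G *m D *m g) = - (2 * mxnorm2 v) *: row k K - c *: row k 1%:M.
  move=> k2; rewrite -row_conj_Mmu_act_d21 // hM mulmxDr mulmxDl mul_mx_scalar.
  by rewrite -scalemxAl mulVmx // linearD linearZ /= addrAC subrr add0r.
move: rowD D01 D02 D11; move: (G *m D *m g) K => Dt K' rowD D01 D02 D11.
have DtE k a : k != i2 -> Dt k a = - (2 * mxnorm2 v) * K' k a - c * (k == a)%:R.
  by move=> k2; have := congr1 (fun r : 'rV[C]_3 => r 0 a) (rowD k k2); rewrite !mxE.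
have K'_eq0 k a : k != i2 -> k != a -> Dt k a = 0 -> K' k a = 0.
  move=> k2 ka; rewrite DtE // (negPf ka) mulr0 subr0 => /eqP.
  by rewrite mulf_eq0 (negPf nv_neq0) => /eqP.
split; [exact: K'_eq0 | exact: K'_eq0 |].
by move: D11; rewrite !DtE // !eqxx => /addIr /(mulfI nv_neq0).
Qed.

Lemma K22_eq0 : K i2 i2 = 0.
Proof.
rewrite -[K i2 i2]mulmx_ev -!mulmxA Qmat_d21_gram_mulmx_eq0 ?row_invmx_mul_v //.
by rewrite mulmx0 mxE.
Qed.

Lemma mxtrace_K : \tr K = \tr Q.
Proof. by rewrite mxtrace_mulC mulmxA mulmxV // mul1mx. Qed.

Lemma row_invmx_mul_Q : K i0 i1 = 0 -> K i0 i2 = 0 ->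
  row i0 G *m Q = K i0 i0 *: row i0 G.
Proof.
move=> K01 K02; have KG : K *m G = G *m Q by rewrite -mulmxA mulmxV // mulmx1.
have rowK : row i0 K = K i0 i0 *: row i0 1%:M.
  move: K01 K02; move: K => A A01 A02; apply/rowP => j; rewrite !mxE.
  by case: (ord3P j) => ->; rewrite ?A01 ?A02 /=; ring.
transitivity (row i0 (K *m G)); first by rewrite KG row_mul.
by rewrite row_mul rowK -scalemxAl -row_mul mul1mx.
Qed.

Theorem act_d21_not_critical : ~ critical (act g (d21 C)).
Proof.
move=> /critical_act_d21[K01 K02 K11].
have trQ : \tr Q = 2 * K i0 i0.
  by rewrite -mxtrace_K /mxtrace big_ord3 K11 K22_eq0; ring.
have w0 := d21_gram_eigenrow_eq0 (row_invmx_mul_Q K01 K02) trQ.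
have := row_mul i0 G g; rewrite mulVmx // w0 mul0mx row1.
by move/matrixP/(_ 0 i0)/eqP; rewrite !mxE !eqxx oner_eq0.
Qed.

End ActD21.

End D21.

Theorem proposition5p2 (R : realType) (g : 'M[R[i]]_3) :
  g \in unitmx -> ~ critical (act g (@d21 R[i])).
Proof. exact: act_d21_not_critical. Qed.
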